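(* Let $H$ be a complex Hilbert space and let $R \in \mathcal{L}(H)$ be an operator of finite rank. Then $I + R$ satisfies the property $\mathcal{AN}^*$.
   Context: $\mathcal{L}(H)$ is the space of bounded linear operators on $H$; $I$ is the identity. For a closed subspace $M \neq \{0\}$ of $H$ and $T \in \mathcal{L}(H)$, write $[T|_M] := \inf\{\|Tx\| : x \in M, \|x\|=1\}$; $T|_M$ satisfies $\mathcal{N}^*$ if there is $x_0 \in M$ with $\|x_0\|=1$ and $\|Tx_0\| = [T|_M]$. $T$ satisfies the property $\mathcal{AN}^*$ if $T|_M$ satisfies $\mathcal{N}^*$ for every closed subspace $M \neq \{0\}$ of $H$. *)

From HB Require Import structures.
From mathcomp Require Import all_boot all_order all_algebra.
From mathcomp Require Import complex.
From mathcomp Require Import boolp classical_sets reals.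
Set Implicit Arguments. Unset Strict Implicit. Unset Printing Implicit Defensive.
Import Order.TTheory GRing.Theory Num.Theory.
Local Open Scope ring_scope.
Local Open Scope classical_set_scope.

Section Hilbert.
Variable R : realType.
Local Notation C := (R[i]).

Record inner_product (V : lmodType C) := InnerProduct {
  ip : V -> V -> C;
  ip_linl : forall (a : C) (x y z : V), ip (a *: x + y) z = a * ip x z + ip y z;
  ip_conj : forall x y : V, ip y x = conjc (ip x y);
  ip_ge0 : forall x : V, 0 <= ip x x;
  ip_eq0 : forall x : V, ip x x = 0 -> x = 0 }.

Variable V : lmodType C.

Definition hnorm (P : inner_product V) (x : V) : R := Num.sqrt (complex.Re (ip P x x)).

Definition cauchy_seq (P : inner_product V) (u : nat -> V) : Prop :=
  forall e : R, 0 < e -> exists N : nat, forall m n : nat,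
    (N <= m)%N -> (N <= n)%N -> hnorm P (u m - u n) < e.

Definition converges_to (P : inner_product V) (u : nat -> V) (l : V) : Prop :=
  forall e : R, 0 < e -> exists N : nat, forall n : nat,
    (N <= n)%N -> hnorm P (u n - l) < e.

Record hilbert := Hilbert {
  hip :> inner_product V;
  hcomplete : forall u : nat -> V, cauchy_seq hip u -> exists l, converges_to hip u l }.

Variable H : hilbert.

Definition bounded_linear (T : V -> V) : Prop :=
  (forall (a : C) (x y : V), T (a *: x + y) = a *: T x + T y) /\
  exists M : R, forall x : V, hnorm H (T x) <= M * hnorm H x.

Definition finite_rank (T : V -> V) : Prop :=
  exists (n : nat) (e : 'I_n -> V), forall x : V,
    exists c : 'I_n -> C, T x = \sum_(i < n) c i *: e i.

Definition closed_subspace (M : set V) : Prop :=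
  M 0 /\
  (forall (a : C) (x y : V), M x -> M y -> M (a *: x + y)) /\
  (forall (u : nat -> V) (l : V), (forall n, M (u n)) -> converges_to H u l -> M l).

Definition restr_lower_bound (T : V -> V) (M : set V) : R :=
  inf [set hnorm H (T x) | x in [set x | M x /\ hnorm H x = 1]].

Definition restr_Nstar (T : V -> V) (M : set V) : Prop :=
  exists x0 : V, M x0 /\ hnorm H x0 = 1 /\ hnorm H (T x0) = restr_lower_bound T M.

Definition ANstar (T : V -> V) : Prop :=
  forall M : set V, closed_subspace M -> M <> [set 0] -> restr_Nstar T M.

End Hilbert.

From HB Require Import structures.
From mathcomp Require Import all_boot all_order all_algebra.
From mathcomp Require Import complex.
From mathcomp Require Import boolp classical_sets reals.
From mathcomp Require Import ring lra.
From mathcomp Require Import topology normedtype matrix_normedtype derive.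
Set Implicit Arguments. Unset Strict Implicit. Unset Printing Implicit Defensive.
Import Order.TTheory GRing.Theory Num.Theory.
Local Open Scope ring_scope.
Local Open Scope complex_scope.
Local Open Scope classical_set_scope.
Import numFieldNormedType.Exports.

(* Let the e_j span the range of R and let K be the set of x in M such that x and R x are
   orthogonal to every e_j ([null_part] below).  K is a closed subspace, R vanishes on K, and
   I + R maps the orthogonal complement W of K in M into the orthogonal complement of K.
   Writing x = k + w with k in K and w in W thus gives
     ||x||^2 = ||k||^2 + ||w||^2   and   ||(I + R) x||^2 = ||k||^2 + ||(I + R) w||^2,
   so minimising ||(I + R) x|| over unit vectors of M amounts to minimising
   ||(I + R) w||^2 - ||w||^2 over the w in W with ||w|| <= 1 (and ||w|| = 1 if K = 0), k being
   then any vector of K of norm sqrt (1 - ||w||^2).  The functionals x |-> <x, e_j> and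
   x |-> <R x, e_j> are jointly injective on W, so W is finite dimensional, and in coordinates
   over an orthonormal basis of W the problem is a continuous function on a compact set. *)

Section InnerProduct.
Variables (R : realType) (V : lmodType R[i]) (P : inner_product V).
Local Notation "<< x , y >>" := (ip P x y).
Local Notation hn := (hnorm P).

Definition ipl (z : V) : {scalar V} := HB.pack (fun x => <<x, z>>)
  (GRing.isLinear.Build _ _ _ _ (fun x => <<x, z>>) (fun a x y => ip_linl P a x y z)).

Lemma ip0l z : <<0, z>> = 0. Proof. exact: (raddf0 (ipl z)). Qed.
Lemma ipDl x y z : <<x + y, z>> = <<x, z>> + <<y, z>>. Proof. exact: (raddfD (ipl z)). Qed.
Lemma ipNl x z : <<- x, z>> = - <<x, z>>. Proof. exact: (raddfN (ipl z)). Qed.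
Lemma ipBl x y z : <<x - y, z>> = <<x, z>> - <<y, z>>. Proof. exact: (raddfB (ipl z)). Qed.
Lemma ipZl a x z : <<a *: x, z>> = a * <<x, z>>. Proof. exact: (scalarZ (ipl z)). Qed.
Lemma ip_suml I (r : seq I) (Q : pred I) (f : I -> V) z :
  <<\sum_(i <- r | Q i) f i, z>> = \sum_(i <- r | Q i) <<f i, z>>.
Proof. exact: (raddf_sum (ipl z)). Qed.

Lemma ip0r z : <<z, 0>> = 0. Proof. by rewrite ip_conj ip0l conjc0. Qed.
Lemma ipDr x y z : <<z, x + y>> = <<z, x>> + <<z, y>>.
Proof. by rewrite ip_conj ipDl rmorphD (ip_conj P x z) (ip_conj P y z). Qed.
Lemma ipNr x z : <<z, - x>> = - <<z, x>>.
Proof. by rewrite ip_conj ipNl rmorphN (ip_conj P x z). Qed.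
Lemma ipBr x y z : <<z, x - y>> = <<z, x>> - <<z, y>>.
Proof. by rewrite ipDr ipNr. Qed.
Lemma ipZr a x z : <<z, a *: x>> = conjc a * <<z, x>>.
Proof. by rewrite ip_conj ipZl rmorphM (ip_conj P x z). Qed.
Lemma ip_sumr I (r : seq I) (Q : pred I) (f : I -> V) z :
  <<z, \sum_(i <- r | Q i) f i>> = \sum_(i <- r | Q i) <<z, f i>>.
Proof.
rewrite ip_conj ip_suml rmorph_sum.
by apply: eq_bigr => i _; rewrite (ip_conj P (f i) z).
Qed.

Definition sqnorm x := complex.Re <<x, x>>.

Lemma ipxx_real x : <<x, x>> = (sqnorm x)%:C.
Proof.
have := ip_ge0 P x; rewrite /sqnorm.
by case: (<<x, x>>) => a b; rewrite lecE /= => /andP[/eqP ->].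
Qed.

Lemma sqnorm_ge0 x : 0 <= sqnorm x.
Proof. by have := ip_ge0 P x; rewrite ipxx_real ler0c. Qed.

Lemma sqnorm_eq0 x : sqnorm x = 0 -> x = 0.
Proof. by move=> x0; apply: (@ip_eq0 _ _ P); rewrite ipxx_real x0. Qed.

Lemma hnorm_ge0 x : 0 <= hn x. Proof. exact: sqrtr_ge0. Qed.

Lemma hnorm_sqr x : hn x ^+ 2 = sqnorm x.
Proof. by rewrite sqr_sqrtr // sqnorm_ge0. Qed.

Lemma hnorm_gt0 x : x != 0 -> 0 < hn x.
Proof.
move=> x0; rewrite /hnorm sqrtr_gt0 -/(sqnorm x) lt_def sqnorm_ge0 andbT.
by apply: contra x0 => /eqP/sqnorm_eq0 ->.
Qed.

Lemma sqnorm0 : sqnorm 0 = 0. Proof. by rewrite /sqnorm ip0l. Qed.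

Lemma ler_hnorm x y : sqnorm x <= sqnorm y -> hn x <= hn y.
Proof. exact: ler_wsqrtr. Qed.

Lemma sqnorm_eq1 x : hn x = 1 -> sqnorm x = 1.
Proof. by rewrite -hnorm_sqr => ->; rewrite expr1n. Qed.

Lemma hnorm_eq1 x : sqnorm x = 1 -> hn x = 1.
Proof. by rewrite /hnorm -/(sqnorm x) => ->; rewrite sqrtr1. Qed.

Lemma sqnorm_lin (s t : R) x y :
  sqnorm (s%:C *: x + t%:C *: y) =
  s ^+ 2 * sqnorm x + 2 * s * t * complex.Re <<x, y>> + t ^+ 2 * sqnorm y.
Proof.
rewrite /sqnorm !(ipDl, ipDr, ipZl, ipZr) !conjc_real (ip_conj P x y).
move: (<<x, x>>) (<<x, y>>) (<<y, y>>) => [a1 b1] [a2 b2] [a3 b3].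
rewrite /real_complex_def /=; ring.
Qed.

Lemma sqnormD x y : sqnorm (x + y) = sqnorm x + 2 * complex.Re <<x, y>> + sqnorm y.
Proof. by have := sqnorm_lin 1 1 x y; rewrite rmorph1 !scale1r => ->; ring. Qed.

Lemma sqnormN x : sqnorm (- x) = sqnorm x.
Proof. by rewrite /sqnorm ipNl ipNr opprK. Qed.

Lemma sqnormZ (t : R) x : sqnorm (t%:C *: x) = t ^+ 2 * sqnorm x.
Proof. by have := sqnorm_lin t 0 x x; rewrite rmorph0 scale0r addr0 => ->; ring. Qed.

Lemma Re_ipC x y : complex.Re <<y, x>> = complex.Re <<x, y>>.
Proof. by rewrite ip_conj; case: (<<x, y>>). Qed.

Lemma sqnorm_orthD x y : <<x, y>> = 0 -> sqnorm (x + y) = sqnorm x + sqnorm y.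
Proof. by move=> xy; rewrite sqnormD xy mulr0 addr0. Qed.

Lemma apollonius x a b :
  sqnorm (a - b) =
  2 * sqnorm (x - a) + 2 * sqnorm (x - b) - 4 * sqnorm (x - (2^-1 : R)%:C *: (a + b)).
Proof.
have -> : x - (2^-1 : R)%:C *: (a + b) = (2^-1 : R)%:C *: ((x - a) + (x - b)).
  have half : (2^-1 : R) + 2^-1 = 1 by rewrite [RHS](splitr 1) mul1r.
  rewrite [RHS]scalerDr !scalerBr addrACA -scalerDl -rmorphD half rmorph1.
  by rewrite scale1r scalerDr opprD.
have -> : a - b = (x - b) - (x - a) by rewrite opprB addrCA addrAC subrr add0r.
move: (x - a) (x - b) => u v.
rewrite sqnormZ [sqnorm (u + v)]sqnormD sqnormD sqnormN ipNr raddfN /= Re_ipC.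
by rewrite exprVn; field.
Qed.

Lemma sqnorm_sub_proj z k : sqnorm k != 0 ->
  sqnorm (z - (<<z, k>> * (sqnorm k)^-1%:C) *: k) =
  sqnorm z - (complex.Re <<z, k>> ^+ 2 + complex.Im <<z, k>> ^+ 2) / sqnorm k.
Proof.
move=> k0; rewrite {1}/sqnorm !(ipBl, ipBr, ipZl, ipZr) (ip_conj P z k) !ipxx_real.
move: (<<z, k>>) (sqnorm z) (sqnorm k) k0 => [a b] n s s0 /=.
by field.
Qed.

Lemma Re_ip_le x y : complex.Re <<x, y>> <= hn x * hn y.
Proof.
set a := complex.Re <<x, y>>.
have key : a ^+ 2 <= sqnorm x * sqnorm y.
  have [y0|ypos] := eqVneq (sqnorm y) 0.
    by rewrite /a (sqnorm_eq0 y0) ip0r /= expr0n mulr_ge0 ?sqnorm_ge0.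
  have yp : 0 < sqnorm y by rewrite lt_def ypos sqnorm_ge0.
  have := sqnorm_ge0 ((sqnorm y)%:C *: x + (- a)%:C *: y); rewrite sqnorm_lin -/a.
  have -> : sqnorm y ^+ 2 * sqnorm x + 2 * sqnorm y * - a * a + (- a) ^+ 2 * sqnorm y =
            sqnorm y * (sqnorm x * sqnorm y - a ^+ 2) by ring.
  by rewrite pmulr_rge0 // subr_ge0.
have hp : 0 <= hn x * hn y by rewrite mulr_ge0 ?hnorm_ge0.
have : (hn x * hn y) ^+ 2 = sqnorm x * sqnorm y by rewrite exprMn !hnorm_sqr.
nra.
Qed.

Lemma hnormN x : hn (- x) = hn x.
Proof. by rewrite /hnorm -/(sqnorm _) sqnormN. Qed.

Lemma hnormZ (t : R) x : hn (t%:C *: x) = `|t| * hn x.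
Proof. by rewrite /hnorm -!/(sqnorm _) sqnormZ sqrtrM ?sqr_ge0 // sqrtr_sqr. Qed.

Lemma norm_Re_ip_le x y : `|complex.Re <<x, y>>| <= hn x * hn y.
Proof.
rewrite ler_norml Re_ip_le andbT lerNl.
by have := Re_ip_le (- x) y; rewrite ipNl raddfN hnormN.
Qed.

Lemma norm_Im_ip_le x y : `|complex.Im <<x, y>>| <= hn x * hn y.
Proof.
have -> : hn y = hn ('i *: y).
  rewrite /hnorm ipZl ipZr; congr (Num.sqrt _).
  by move: (<<y, y>>) => [a b] /=; ring.
have := norm_Re_ip_le x ('i *: y); rewrite ipZr.
by move: (<<x, y>>) => [a b] /=; rewrite mul0r sub0r mulN1r opprK.
Qed.

Lemma hnormD_le x y : hn (x + y) <= hn x + hn y.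
Proof.
have h0 : 0 <= hn x + hn y by rewrite addr_ge0 ?hnorm_ge0.
rewrite -(ger0_norm h0) -sqrtr_sqr; apply: ler_wsqrtr.
rewrite -/(sqnorm _) sqnormD -!hnorm_sqr.
have := Re_ip_le x y; have := hnorm_ge0 x; have := hnorm_ge0 y; nra.
Qed.

End InnerProduct.

Section LinearSubspace.
Variables (R : realType) (V : lmodType R[i]).

Definition linear_subspace (S : set V) :=
  S 0 /\ forall (a : R[i]) x y, S x -> S y -> S (a *: x + y).

Variables (S : set V) (hS : linear_subspace S).

Lemma subspace0 : S 0. Proof. by case: hS. Qed.

Lemma subspaceD x y : S x -> S y -> S (x + y).
Proof. by move=> Sx Sy; rewrite -[x]scale1r; apply: hS.2. Qed.

Lemma subspaceZ a x : S x -> S (a *: x).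
Proof. by move=> Sx; rewrite -[_ *: x]addr0; apply: hS.2 => //; apply: subspace0. Qed.

Lemma subspaceB x y : S x -> S y -> S (x - y).
Proof. by move=> Sx Sy; rewrite addrC -scaleN1r; apply: hS.2. Qed.

Lemma subspace_sum d (c : 'I_d -> R[i]) (f : 'I_d -> V) :
  (forall i, S (f i)) -> S (\sum_i c i *: f i).
Proof. by move=> Sf; elim/big_rec: _ => [|i y _ Sy]; [exact: subspace0 | exact: hS.2]. Qed.

End LinearSubspace.

Lemma closed_subspace_linear (R : realType) (V : lmodType R[i]) (H : hilbert V) M :
  closed_subspace H M -> linear_subspace M.
Proof. by case=> M0 [Mlin _]. Qed.

Section Orthonormal.
Variables (R : realType) (V : lmodType R[i]) (P : inner_product V).
Local Notation "<< x , y >>" := (ip P x y).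
Local Notation hn := (hnorm P).

Definition orthonormal_family d (f : 'I_d -> V) := forall i j, <<f i, f j>> = (i == j)%:R.

Lemma ip_comb_orthonormal d (f : 'I_d -> V) (a : 'I_d -> R[i]) j :
  orthonormal_family f -> <<\sum_i a i *: f i, f j>> = a j.
Proof.
move=> onf; rewrite ip_suml (bigD1 j) //= ipZl onf eqxx mulr1 big1 ?addr0 //.
by move=> i /negbTE ij; rewrite ipZl onf ij mulr0.
Qed.

Lemma hnorm_orthonormal d (f : 'I_d -> V) i : orthonormal_family f -> hn (f i) = 1.
Proof. by move=> onf; rewrite /hnorm onf eqxx sqrtr1. Qed.

Variables (S : set V) (hS : linear_subspace S).

Lemma orthonormal_extend d (f : 'I_d -> V) w :
  (forall i, S (f i)) -> orthonormal_family f -> S w -> w != \sum_i <<w, f i>> *: f i ->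
  exists g : 'I_d.+1 -> V, (forall i, S (g i)) /\ orthonormal_family g.
Proof.
move=> Sf onf Sw wf.
pose r := w - \sum_i <<w, f i>> *: f i.
have r0 : r != 0 by rewrite subr_eq0.
have rf j : <<r, f j>> = 0 by rewrite ipBl ip_comb_orthonormal // subrr.
pose r1 := (hn r)^-1%:C *: r.
have r1r1 : <<r1, r1>> = 1.
  rewrite ipxx_real sqnormZ -hnorm_sqr -exprMn mulVf ?expr1n //.
  by rewrite gt_eqF // hnorm_gt0.
have r1f j : <<r1, f j>> = 0 by rewrite ipZl rf mulr0.
have fr1 j : <<f j, r1>> = 0 by rewrite ip_conj r1f conjc0.
exists (fun j => if unlift ord_max j is Some i then f i else r1); split.
  move=> j; case: (unliftP ord_max j) => [i _|_] //.
  by apply: subspaceZ; rewrite // /r; apply: subspaceB => //; apply: subspace_sum.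
move=> i j.
case: (unliftP ord_max i) => [i' -> | ->]; case: (unliftP ord_max j) => [j' -> | ->].
- by rewrite (inj_eq lift_inj).
- by rewrite fr1 eq_sym (negbTE (neq_lift _ _)).
- by rewrite r1f (negbTE (neq_lift _ _)).
- by rewrite r1r1 eqxx.
Qed.

Lemma subspace_sqnorm_exists k (s : R) : S k -> k != 0 -> 0 <= s ->
  exists2 k', S k' & sqnorm P k' = s.
Proof.
move=> Sk k0 s0; pose c : R[i] := (Num.sqrt s / hn k)%:C.
exists (c *: k); first exact (subspaceZ hS c Sk).
by rewrite /c sqnormZ -(hnorm_sqr P k) -exprMn mulfVK ?gt_eqF ?hnorm_gt0 // sqr_sqrtr.
Qed.

Lemma orthonormal_size_le N (phi : 'I_N -> {scalar V}) :
  (forall x, S x -> (forall j, phi j x = 0) -> x = 0) ->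
  forall d (f : 'I_d -> V), (forall i, S (f i)) -> orthonormal_family f -> (d <= N)%N.
Proof.
move=> phi_inj d f Sf onf.
pose A : 'M[R[i]]_(d, N) := \matrix_(i, j) phi j (f i).
suff /eqP <- : row_free A by exact: rank_leq_col.
apply: inj_row_free => c cA.
pose y := \sum_k c 0 k *: f k.
have y0 : y = 0.
  apply: phi_inj => [|j]; first exact: subspace_sum.
  have := congr1 (fun m : 'rV_N => m 0 j) cA; rewrite !mxE => <-.
  by rewrite raddf_sum; apply: eq_bigr => k _; rewrite mxE; apply: scalarZ.
by apply/rowP => k; rewrite mxE -(ip_comb_orthonormal _ k onf) -/y y0 ip0l.
Qed.

Lemma orthonormal_basis_exists N :
  (forall d (f : 'I_d -> V), (forall i, S (f i)) -> orthonormal_family f -> (d <= N)%N) ->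
  exists d (f : 'I_d -> V), [/\ forall i, S (f i), orthonormal_family f &
    forall w, S w -> w = \sum_i <<w, f i>> *: f i].
Proof.
move=> bound; apply: contrapT => nobasis.
suff [f [Sf onf]] : exists f : 'I_N.+1 -> V, (forall i, S (f i)) /\ orthonormal_family f.
  by have := bound _ f Sf onf; rewrite ltnn.
elim: N.+1 => [|d [f [Sf onf]]].
  by exists (fun=> 0); split=> [_|]; [exact: subspace0 hS | case].
apply: contrapT => nog; apply: nobasis; exists d, f; split => // w Sw.
have [//|wf] := eqVneq w (\sum_i <<w, f i>> *: f i).
by case: nog; apply: orthonormal_extend wf.
Qed.

End Orthonormal.

Section Convergence.
Variables (R : realType) (V : lmodType R[i]) (P : inner_product V).
Local Notation "<< x , y >>" := (ip P x y).
Local Notation hn := (hnorm P).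

Lemma converges_ip_eq0 (u : nat -> V) l g :
  converges_to P u l -> (forall k, <<u k, g>> = 0) -> <<l, g>> = 0.
Proof.
move=> ul ug.
have small (r : R) : (forall n, `|r| <= hn (u n - l) * hn g) -> r = 0.
  move=> hr; apply/normr0_eq0/le_anti; rewrite normr_ge0 andbT.
  apply/ler_addgt0Pr => e e0; rewrite add0r.
  have g1 : 0 < hn g + 1 by rewrite ltr_wpDl ?hnorm_ge0.
  have [N hN] := ul _ (divr_gt0 e0 g1).
  apply: le_trans (hr N) _.
  have tE : e / (hn g + 1) * (hn g + 1) = e by rewrite divfK ?gt_eqF.
  have := hN N (leqnn N); have := hnorm_ge0 P (u N - l); have := hnorm_ge0 P g.
  set t := e / _ in tE *; nra.
have lE n : <<l, g>> = - <<u n - l, g>> by rewrite ipBl ug sub0r opprK.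
have Re0 : complex.Re <<l, g>> = 0.
  by apply: small => n; rewrite (lE n) raddfN normrN norm_Re_ip_le.
have Im0 : complex.Im <<l, g>> = 0.
  by apply: small => n; rewrite (lE n) raddfN normrN norm_Im_ip_le.
by case: (<<l, g>>) Re0 Im0 => a b /= -> ->.
Qed.

Lemma converges_bounded (F : {linear V -> V}) B (u : nat -> V) l :
  (forall x, hn (F x) <= B * hn x) -> converges_to P u l ->
  converges_to P (F \o u) (F l).
Proof.
move=> FB ul e e0.
have B1 : 0 < `|B| + 1 by rewrite ltr_wpDl.
have [N hN] := ul _ (divr_gt0 e0 B1).
exists N => n Nn /=; rewrite -linearB.
apply: le_lt_trans (FB _) _.
have tE : e / (`|B| + 1) * (`|B| + 1) = e by rewrite divfK ?gt_eqF.
have := hN n Nn; have := hnorm_ge0 P (u n - l); have := ler_norm B.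
set t := e / _ in tE *; nra.
Qed.

End Convergence.

Section Eps.
Variable R : realType.

Definition eps (n : nat) : R := n.+1%:R^-1.

Lemma eps_gt0 n : 0 < eps n. Proof. by rewrite /eps invr_gt0 ltr0n. Qed.

Lemma eps_le1 n : eps n <= 1.
Proof. by rewrite /eps invf_le1 ?ltr0n // ler1n. Qed.

Lemma eps_small (e : R) : 0 < e -> exists N, forall n, (N <= n)%N -> eps n < e.
Proof.
move=> e0; exists (Num.Def.archi_bound e^-1) => n Nn.
rewrite /eps invf_plt ?posrE ?ltr0n //.
apply: lt_le_trans (archi_boundP _) _; first by rewrite invr_ge0 ltW.
by rewrite ler_nat; apply: leq_trans Nn _.
Qed.

End Eps.

Section Projection.
Variables (R : realType) (V : lmodType R[i]) (H : hilbert V) (K : set V).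
Hypothesis hK : closed_subspace H K.
Local Notation "<< x , y >>" := (ip H x y).
Local Notation hn := (hnorm H).
Let lK : linear_subspace K := closed_subspace_linear hK.

Lemma min_dist_orth x p : K p -> (forall k, K k -> hn (x - p) <= hn (x - k)) ->
  forall k, K k -> <<x - p, k>> = 0.
Proof.
move=> Kp pmin k Kk.
have [->|k0] := eqVneq k 0; first by rewrite ip0r.
have s0 : 0 < sqnorm H k by rewrite -hnorm_sqr exprn_gt0 // hnorm_gt0.
have := pmin _ (subspaceD lK Kp (subspaceZ lK (<<x - p, k>> * (sqnorm H k)^-1%:C) Kk)).
rewrite opprD addrA -ler_sqr ?nnegrE ?hnorm_ge0 // !hnorm_sqr.
rewrite sqnorm_sub_proj ?gt_eqF // lerDl oppr_ge0 pmulr_lle0 ?invr_gt0 //.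
case: (<<x - p, k>>) => a b /= q0.
have /eqP : a ^+ 2 + b ^+ 2 = 0 by apply/le_anti; rewrite q0 addr_ge0 ?sqr_ge0.
by rewrite paddr_eq0 ?sqr_ge0 // !sqrf_eq0 => /andP[/eqP-> /eqP->].
Qed.

Lemma minimizing_seq_cauchy x d (ks : nat -> V) : 0 <= d ->
  (forall k, K k -> d <= hn (x - k)) -> (forall n, K (ks n)) ->
  (forall n, hn (x - ks n) < d + eps R n) -> cauchy_seq H ks.
Proof.
move=> d0 dle Kks ksd e e0.
have d84 : 0 < 8 * d + 4 by lra.
pose eta := e ^+ 2 / (8 * d + 4).
have eta0 : 0 < eta by rewrite divr_gt0 // exprn_gt0.
have etaE : eta * (8 * d + 4) = e ^+ 2 by rewrite /eta mulfVK // gt_eqF.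
have [N hN] := eps_small eta0.
exists N => m n Nm Nn.
rewrite -ltr_sqr ?nnegrE ?hnorm_ge0 ?ltW // hnorm_sqr (apollonius H x) -!hnorm_sqr.
have := dle _ (subspaceZ lK (2^-1 : R)%:C (subspaceD lK (Kks m) (Kks n))).
have := hN _ Nm; have := hN _ Nn; have := ksd m; have := ksd n.
have := eps_le1 R m; have := eps_le1 R n; have := eps_gt0 R m; have := eps_gt0 R n.
have := hnorm_ge0 H (x - ks m); have := hnorm_ge0 H (x - ks n).
move: etaE d0; set a := hn (x - ks m); set b := hn (x - ks n); set c := hn (x - _ *: _).
move: (eps R m) (eps R n) => em en; nra.
Qed.

Lemma min_dist_exists x : exists2 p, K p & forall k, K k -> hn (x - p) <= hn (x - k).
Proof.
pose S := [set hn (x - k) | k in K].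
have S0 : S !=set0 by exists (hn (x - 0)), 0 => //; exact: subspace0 lK.
have Slb : has_lbound S by exists 0 => _ [k _ <-]; exact: hnorm_ge0.
have dle k : K k -> inf S <= hn (x - k) by move=> Kk; apply: ge_inf => //; exists k.
have d0 : 0 <= inf S by apply: lb_le_inf => // _ [k _ <-]; exact: hnorm_ge0.
have approx n : exists k, K k /\ hn (x - k) < inf S + eps R n.
  have : inf S < inf S + eps R n by rewrite ltrDl eps_gt0.
  by case/(inf_lt S0) => _ [k Kk <-] lt; exists k.
have [ks ksP] := choice approx.
have [l ksl] := hcomplete (minimizing_seq_cauchy d0 dle (fun n => (ksP n).1)
  (fun n => (ksP n).2)).
exists l => [|k Kk]; first exact: hK.2.2 _ _ (fun n => (ksP n).1) ksl.
apply: le_trans (dle _ Kk); apply/ler_addgt0Pr => eta eta0.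
have eta2 : 0 < eta / 2 by rewrite divr_gt0.
have [N1 hN1] := ksl _ eta2.
have [N2 hN2] := eps_small eta2.
pose n := maxn N1 N2.
have := hN1 n (leq_maxl _ _); have := hN2 n (leq_maxr _ _); have := (ksP n).2.
have := hnormD_le H (x - ks n) (ks n - l); rewrite addrA subrK.
lra.
Qed.

Lemma orth_projection x : exists2 p, K p & forall k, K k -> <<x - p, k>> = 0.
Proof. by have [p Kp pmin] := min_dist_exists x; exists p; last exact: min_dist_orth. Qed.

End Projection.

(* Complex coordinates are encoded as real row vectors (real parts, then imaginary parts),
   where the compactness and continuity theory of [matrix_normedtype] applies. *)
Section Coordinates.
Variables (R : realType) (d : nat).

Definition rV_coef (v : 'rV[R]_(d + d)) (i : 'I_d) : R[i] :=
  v ord0 (lshift d i) +i* v ord0 (rshift d i).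

Definition coef_rV (c : 'I_d -> R[i]) : 'rV[R]_(d + d) :=
  row_mx (\row_i complex.Re (c i)) (\row_i complex.Im (c i)).

Lemma coef_rVK c i : rV_coef (coef_rV c) i = c i.
Proof. by rewrite /rV_coef row_mxEl row_mxEr !mxE; case: (c i). Qed.

End Coordinates.

Lemma continuous_sum (R : realType) (T : topologicalType) I (r : seq I) (F : I -> T -> R) :
  (forall i, continuous (F i)) -> continuous (fun t => \sum_(i <- r) F i t).
Proof.
move=> Fc; elim: r => [|i r IH].
  under eq_fun do rewrite big_nil; exact: cst_continuous.
under eq_fun do rewrite big_cons.
by move=> t; apply: continuousD; [exact: Fc | exact: IH].
Qed.

Section FiniteDimension.
Variables (R : realType) (V : lmodType R[i]) (P : inner_product V).
Local Notation "<< x , y >>" := (ip P x y).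
Local Notation sqn := (sqnorm P).

Definition rV_comb d (g : 'I_d -> V) (v : 'rV[R]_(d + d)) := \sum_i rV_coef v i *: g i.

Lemma continuous_sqnorm_comb d (g : 'I_d -> V) : continuous (fun v => sqn (rV_comb g v)).
Proof.
pose x (v : 'rV[R]_(d + d)) i := v ord0 (lshift d i).
pose y (v : 'rV[R]_(d + d)) i := v ord0 (rshift d i).
have -> : (fun v => sqn (rV_comb g v)) = fun v => \sum_i \sum_j
    ((x v i * x v j + y v i * y v j) * complex.Re <<g i, g j>>
     - (y v i * x v j - x v i * y v j) * complex.Im <<g i, g j>>).
  apply/funext => v; rewrite /sqnorm /rV_comb ip_suml raddf_sum; apply: eq_bigr => i _.
  rewrite ipZl ip_sumr mulr_sumr raddf_sum; apply: eq_bigr => j _.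
  by rewrite ipZr /rV_coef /x /y; case: (<<g i, g j>>) => p q /=; ring.
rewrite /x /y; apply: continuous_sum => i; apply: continuous_sum => j v.
by repeat first [apply: (continuousB (f := fun v => _) (g := fun v => _))
  | apply: (continuousD (f := fun v => _) (g := fun v => _))
  | apply: (continuousM (s := fun v => _) (t := fun v => _))
  | exact: cst_continuous | exact: coord_continuous].
Qed.

Variables (S : set V) (d : nat) (f : 'I_d -> V) (T : {linear V -> V}).
Hypotheses (hS : linear_subspace S) (Sf : forall i, S (f i)) (onf : orthonormal_family P f)
  (f_span : forall w, S w -> w = \sum_i <<w, f i>> *: f i).

Let comb_coef w : S w -> rV_comb f (coef_rV (fun i => <<w, f i>>)) = w.
Proof. by move=> Sw; rewrite [RHS]f_span //; apply: eq_bigr => i _; rewrite coef_rVK. Qed.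

Lemma compact_coef_ball (Q : Prop) :
  compact [set v | sqn (rV_comb f v) <= 1 /\ (Q \/ sqn (rV_comb f v) = 1)].
Proof.
pose nv v := sqn (rV_comb f v).
have nv_cont : continuous nv := continuous_sqnorm_comb (g := f).
have QC : closed [set r : R | Q \/ r = 1].
  have [q|nq] := pselect Q.
    rewrite (_ : [set r | _] = setT) ?closedT //.
    by apply/seteqP; split => r //= _; left.
  rewrite (_ : [set r | _] = [set 1]) ?closed_eq //.
  by apply/seteqP; split => r /= => [[/nq|]|->] //; right.
have nv_closed (D : set R) : closed D -> closed (nv @^-1` D).
  by move=> Dc; apply: preimage_closed => // v _; exact: nv_cont.
apply: (subclosed_compact (closedI (nv_closed _ (closed_le (y := 1))) (nv_closed _ QC))
  (@rV_compact R _ (fun=> `[(-1 : R), 1]) (fun=> @segment_compact R _ _))).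
move=> v [nv1 _] j; rewrite /= in_itv /= -ler_norml.
have hv : hnorm P (rV_comb f v) <= 1 by rewrite -sqrtr1; exact: ler_wsqrtr.
have coef i : <<rV_comb f v, f i>> = rV_coef v i by exact: ip_comb_orthonormal.
case: (split_ordP j) => i ->.
- have := norm_Re_ip_le P (rV_comb f v) (f i).
  by rewrite coef hnorm_orthonormal // mulr1 => /le_trans; apply.
- have := norm_Im_ip_le P (rV_comb f v) (f i).
  by rewrite coef hnorm_orthonormal // mulr1 => /le_trans; apply.
Qed.

Lemma orthonormal_basis_min (Q : Prop) :
  (exists w, [/\ S w, sqn w <= 1 & Q \/ sqn w = 1]) ->
  exists w0, [/\ S w0, sqn w0 <= 1, Q \/ sqn w0 = 1 &
    forall w, S w -> sqn w <= 1 -> Q \/ sqn w = 1 ->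
      sqn (T w0) - sqn w0 <= sqn (T w) - sqn w].
Proof.
move=> [w1 [Sw1 w1le w1Q]].
pose F v := sqn (T (rV_comb f v)) - sqn (rV_comb f v).
have F_cont : continuous F.
  have -> : F = fun v => sqn (rV_comb (T \o f) v) - sqn (rV_comb f v).
    by apply/funext => v; rewrite /F /rV_comb linear_sum; under eq_bigr do rewrite linearZ.
  by move=> v; apply: continuousB; exact: continuous_sqnorm_comb.
have A0 : [set v | sqn (rV_comb f v) <= 1 /\ (Q \/ sqn (rV_comb f v) = 1)] !=set0.
  by exists (coef_rV (fun i => <<w1, f i>>)); rewrite /= comb_coef.
have [c /[!inE] -[c1 cQ] cmin] :=
  EVT_min_rV A0 (compact_coef_ball (Q := Q)) (continuous_subspaceT F_cont).
exists (rV_comb f c); split => // [|w Sw wle wQ]; first exact: subspace_sum.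
have := cmin (coef_rV (fun i => <<w, f i>>)); rewrite /F comb_coef //; apply.
by rewrite inE /= comb_coef.
Qed.

End FiniteDimension.

Section Reduction.
Variables (R : realType) (V : lmodType R[i]) (H : hilbert V).
Local Notation "<< x , y >>" := (ip H x y).
Local Notation hn := (hnorm H).
Local Notation sqn := (sqnorm H).

Definition orth_compl (M K : set V) := [set w | M w /\ forall k, K k -> <<w, k>> = 0].

Variables (T : {linear V -> V}) (M K : set V) (N : nat).
Hypotheses (hM : closed_subspace H M) (hK : closed_subspace H K) (KM : forall k, K k -> M k).
Hypotheses (T_id : forall k, K k -> T k = k)
  (T_orth : forall k w, K k -> orth_compl M K w -> <<k, T w>> = 0)
  (compl_dim : forall d (f : 'I_d -> V), (forall i, orth_compl M K (f i)) ->
     orthonormal_family H f -> (d <= N)%N).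
Local Notation W := (orth_compl M K).
Let lM : linear_subspace M := closed_subspace_linear hM.
Let lK : linear_subspace K := closed_subspace_linear hK.

Lemma orth_compl_linear : linear_subspace W.
Proof.
split; first by split; [exact: subspace0 lM | move=> k _; rewrite ip0l].
move=> a x y [Mx xK] [My yK]; split; first exact: lM.2.
by move=> k Kk; rewrite ip_linl xK // yK // mulr0 addr0.
Qed.

Lemma orth_decomposition x : M x -> exists k w, [/\ K k, W w & x = k + w].
Proof.
move=> Mx; have [p Kp pK] := orth_projection hK x.
exists p, (x - p); split => //; last by rewrite addrC subrK.
by split; [apply: (subspaceB lM Mx); exact: KM | exact: pK].
Qed.

Lemma sqnorm_decomposition k w : K k -> W w ->
  sqn (k + w) = sqn k + sqn w /\ sqn (T (k + w)) = sqn k + sqn (T w).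
Proof.
move=> Kk Ww; rewrite linearD T_id //; split; apply: sqnorm_orthD.
- by rewrite ip_conj Ww.2 // conjc0.
- exact: T_orth.
Qed.

Lemma unit_decomposition x : M x -> hn x = 1 ->
  exists k w, [/\ K k, W w, x = k + w, sqn w <= 1 &
    (exists k, K k /\ k != 0) \/ sqn w = 1].
Proof.
move=> Mx /sqnorm_eq1 xn; have [k [w [Kk Ww xE]]] := orth_decomposition Mx.
exists k, w; split => //.
  by have := sqnorm_ge0 H k; have := (sqnorm_decomposition Kk Ww).1; rewrite -xE; lra.
have [k0|k0] := eqVneq k 0; last by left; exists k.
by right; rewrite -xn xE k0 add0r.
Qed.

Lemma reduction_min : (exists x, M x /\ hn x = 1) ->
  exists x0, [/\ M x0, hn x0 = 1 & forall x, M x -> hn x = 1 -> hn (T x0) <= hn (T x)].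
Proof.
move=> [x1 [Mx1 x1n]].
have [d [f [Wf onf f_span]]] := orthonormal_basis_exists orth_compl_linear compl_dim.
have [|w0 [Ww0 w0le w0Q w0min]] := orthonormal_basis_min T orth_compl_linear Wf onf f_span
  (Q := exists k, K k /\ k != 0).
  by have [_ [w [_ Ww _ wle wQ]]] := unit_decomposition Mx1 x1n; exists w.
have [k0 Kk0 k0n] : exists2 k0, K k0 & sqn k0 = 1 - sqn w0.
  have [w01|w0lt] := eqVneq (sqn w0) 1.
    by exists 0; [exact: subspace0 lK | rewrite w01 subrr sqnorm0].
  case: w0Q => [[k [Kk k0]]|/eqP]; last by rewrite (negbTE w0lt).
  have s0 : 0 <= 1 - sqn w0 by rewrite subr_ge0.
  exact (subspace_sqnorm_exists H lK Kk k0 s0).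
have [x0n Tx0n] := sqnorm_decomposition Kk0 Ww0.
have Mx0 : M (k0 + w0) := subspaceD lM (KM Kk0) Ww0.1.
exists (k0 + w0); split => //; first by apply: hnorm_eq1; rewrite x0n k0n subrK.
move=> x Mx xn; have [k [w [Kk Ww xE wle wQ]]] := unit_decomposition Mx xn.
have [xsq Txsq] := sqnorm_decomposition Kk Ww.
have := w0min w Ww wle wQ; have := sqnorm_eq1 xn.
by rewrite xE => xs minw; apply: ler_hnorm; rewrite Tx0n Txsq k0n; lra.
Qed.

End Reduction.

Section FiniteRank.
Variables (R : realType) (V : lmodType R[i]) (H : hilbert V) (Rk : {linear V -> V}).
Variables (B : R) (n : nat) (e : 'I_n -> V) (M : set V).
Hypotheses (RkB : forall x, hnorm H (Rk x) <= B * hnorm H x)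
  (Rk_range : forall x, exists c : 'I_n -> R[i], Rk x = \sum_i c i *: e i)
  (hM : closed_subspace H M).
Local Notation "<< x , y >>" := (ip H x y).

Definition id_plus x := x + Rk x.

Fact id_plus_is_linear : linear id_plus.
Proof. by move=> a x y; rewrite /id_plus linearP scalerDr addrACA. Qed.

HB.instance Definition _ := GRing.isLinear.Build _ _ _ _ id_plus id_plus_is_linear.

Definition null_part := [set x | M x /\ forall j, <<Rk x, e j>> = 0 /\ <<x, e j>> = 0].

Lemma null_part_closed : closed_subspace H null_part.
Proof.
have lM := closed_subspace_linear hM.
split; [|split].
- split; first exact: subspace0 lM.
  by move=> j; rewrite raddf0 !ip0l.
- move=> a x y [Mx xe] [My ye]; split; first exact: lM.2.
  move=> j; rewrite linearP !ip_linl; have [-> ->] := xe j; have [-> ->] := ye j.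
  by rewrite mulr0 addr0.
- move=> u l Nu ul; split; first by apply: hM.2.2 ul => k; case: (Nu k).
  move=> j; split.
  + apply: (converges_ip_eq0 (converges_bounded RkB ul)) => k /=.
    by have [_ /(_ j) []] := Nu k.
  + apply: (converges_ip_eq0 ul) => k.
    by have [_ /(_ j) []] := Nu k.
Qed.

Lemma null_part_ker k : null_part k -> Rk k = 0.
Proof.
move=> [_ ke]; have [c kc] := Rk_range k.
apply: (@ip_eq0 _ _ H); rewrite {2}kc ip_sumr big1 // => i _.
by rewrite ipZr (ke i).1 mulr0.
Qed.

Lemma null_part_orth_range k x : null_part k -> <<k, Rk x>> = 0.
Proof.
move=> [_ ke]; have [c ->] := Rk_range x.
by rewrite ip_sumr big1 // => i _; rewrite ipZr (ke i).2 mulr0.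
Qed.

Lemma null_part_compl_dim d (f : 'I_d -> V) :
  (forall i, orth_compl H M null_part (f i)) -> orthonormal_family H f -> (d <= n + n)%N.
Proof.
pose phi j : {scalar V} :=
  match split j with inl i => ipl H (e i) \o Rk | inr i => ipl H (e i) end.
apply: (orthonormal_size_le (orth_compl_linear null_part hM) (phi := phi)) => x [Mx xK] phi0.
have xN : null_part x.
  split=> // j; split.
  - by have := phi0 (lshift n j); rewrite /phi (unsplitK (inl j)).
  - by have := phi0 (rshift n j); rewrite /phi (unsplitK (inr j)).
by apply: (@ip_eq0 _ _ H); apply: xK.
Qed.

Lemma id_plus_min : (exists x, M x /\ hnorm H x = 1) ->
  exists x0, [/\ M x0, hnorm H x0 = 1 &
    forall x, M x -> hnorm H x = 1 -> hnorm H (id_plus x0) <= hnorm H (id_plus x)].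
Proof.
apply: (reduction_min (K := null_part) (N := n + n) hM null_part_closed) => //.
- by move=> k [].
- by move=> k Nk /=; rewrite /id_plus null_part_ker // addr0.
- move=> k w Nk [_ wN].
  by rewrite /= /id_plus ipDr null_part_orth_range // addr0 ip_conj wN // conjc0.
- exact: null_part_compl_dim.
Qed.

End FiniteRank.

Lemma unit_vector_exists (R : realType) (V : lmodType R[i]) (H : hilbert V) M :
  closed_subspace H M -> M <> [set 0] -> exists x, M x /\ hnorm H x = 1.
Proof.
move=> hM M0.
have [x [Mx x0]] : exists x, M x /\ x != 0.
  apply: contrapT => no; apply: M0; apply/seteqP; split => [y My|y ->].
    by apply: contrapT => y0; apply: no; exists y; split => //; apply/eqP.
  exact: hM.1.
exists ((hnorm H x)^-1%:C *: x); split; first exact (subspaceZ (closed_subspace_linear hM) _ Mx).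
by rewrite hnormZ ger0_norm ?invr_ge0 ?hnorm_ge0 // mulVf // gt_eqF // hnorm_gt0.
Qed.

Lemma restr_Nstar_of_min (R : realType) (V : lmodType R[i]) (H : hilbert V)
    (T : V -> V) M x0 :
  M x0 -> hnorm H x0 = 1 ->
  (forall x, M x -> hnorm H x = 1 -> hnorm H (T x0) <= hnorm H (T x)) ->
  restr_Nstar H T M.
Proof.
move=> Mx0 x0n x0min; exists x0; split => //; split => //.
apply/eqP; rewrite eq_le; apply/andP; split.
  by apply: lb_le_inf => [|_ [y [My yn] <-]]; [exists (hnorm H (T x0)), x0 | exact: x0min].
by apply: ge_inf; [exists 0 => _ [y _ <-]; exact: hnorm_ge0 | exists x0].
Qed.

Theorem lemma3p8 (R : realType) (V : lmodType R[i]) (H : hilbert V)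
  (Rk : V -> V) :
  bounded_linear H Rk -> finite_rank Rk ->
  ANstar H (fun x : V => x + Rk x).
Proof.
move=> [Rk_lin [B RkB]] [n [e Rk_range]] M hM M0.
pose RkL : {linear V -> V} := HB.pack Rk (GRing.isLinear.Build _ _ _ _ Rk Rk_lin).
have [x0 [Mx0 x0n x0min]] :=
  id_plus_min (Rk := RkL) RkB Rk_range hM (unit_vector_exists hM M0).
exact: restr_Nstar_of_min Mx0 x0n x0min.
Qed.
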